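(* Let $\Theta$ be a parameter set, where each $\theta\in\Theta$ determines a probability distribution $p_\theta$ over trajectories, and write $KL(\theta'\|\theta):=KL(p_{\theta'}\|p_\theta)$. Let $C:\Theta\to\mathbb{R}$ be a cost function, and for $\alpha>0$ let $J^{\alpha}(\theta)=\inf_{\theta'}\big(\alpha KL(\theta'\|\theta)+C(\theta')\big)$. For a step size $\mathcal{E}>0$ define the direct update $\Theta^{C}_{\mathcal{E}}(\theta)=\operatorname{argmin}_{\theta':\,KL(\theta'\|\theta)\le\mathcal{E}} C(\theta')$, the smoothed update $R^{J^\alpha}_{\mathcal{E}}(\theta)=\operatorname{argmin}_{\theta':\,KL(\theta'\|\theta)\le\mathcal{E}} J^{\alpha}(\theta')$, and the optimal two-step cost $$C^*_{\mathcal{E},\mathcal{E}'}(\theta)=\min_{\theta':\,KL(\theta'\|\theta)\le\mathcal{E}}\ \min_{\theta'':\,KL(\theta''\|\theta')\le\mathcal{E}'} C(\theta'')=\min_{\theta':\,KL(\theta'\|\theta)\le\mathcal{E}} C\big(\Theta^{C}_{\mathcal{E}'}(\theta')\big).$$ Then: (1) For every $\theta$, every $\mathcal{E}>0$ and every $\alpha>0$ there exists $\mathcal{E}'=\mathcal{E}'_\alpha(\theta)$ (depending on $\theta$ and $\alpha$) such that, setting $\Theta'=R^{J^\alpha}_{\mathcal{E}}(\theta)$ and $\Theta''=\Theta^{C}_{\mathcal{E}'}(\Theta')$, one has $C(\Theta'')=C^*_{\mathcal{E},\mathcal{E}'}(\theta)$; i.e. a smoothed update with step size $\mathcal{E}$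 followed by a direct update with step size $\mathcal{E}'$ is an optimal two-step update. (2) The step size $\mathcal{E}'_\alpha(\theta)$ in (1) is monotonically decreasing (non-increasing) as a function of $\alpha$.
   Context: All minima, infima and argmins appearing above are assumed to be attained (the paper treats them as well-defined minimizers). The quantity $KL(\theta'\|\theta)$ is the Kullback–Leibler divergence between the trajectory distributions induced by the parameters $\theta'$ and $\theta$, and is nonnegative with $KL(\theta\|\theta)=0$. *)

From HB Require Import structures.
From mathcomp Require Import all_boot all_order all_algebra.
From mathcomp Require Import all_classical all_reals.
Set Implicit Arguments. Unset Strict Implicit. Unset Printing Implicit Defensive.
Import Order.TTheory GRing.Theory Num.Theory.
Local Open Scope classical_set_scope.
Local Open Scope ring_scope.

Section Defs.
Variables (R : realType) (T : Type).

Definition kball (KL : T -> T -> R) (eps : R) (t : T) : set T :=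
  [set t' | KL t' t <= eps].

Definition is_argmin (A : set T) (f : T -> R) (x : T) : Prop :=
  A x /\ forall y, A y -> f x <= f y.

Definition Jal (KL : T -> T -> R) (C : T -> R) (a : R) (t : T) : R :=
  inf (range (fun t' => a * KL t' t + C t')).

Definition Cstar (KL : T -> T -> R) (C : T -> R) (E E' : R) (t : T) : R :=
  inf [set inf (C @` kball KL E' t') | t' in kball KL E t].

End Defs.

From HB Require Import structures.
From mathcomp Require Import all_boot all_order all_algebra.
From mathcomp Require Import all_classical all_reals.
From mathcomp Require Import lra.
Import Order.TTheory GRing.Theory Num.Theory.
Local Open Scope classical_set_scope.
Local Open Scope ring_scope.

(* Let t1 be a smoothed update and p the proximal point of t1, i.e. the
   minimizer of a KL(. || t1) + C.  Then p minimizes C on the KL-ball around t1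
   of radius E' := KL(p || t1), and for every u in the E-ball around t,
   a E' + C p = J^a(t1) <= J^a(u) <= a E' + min_{KL(. || u) <= E'} C,
   so t1 is an optimal first step for the two-step problem with radii E, E'.
   Comparing the proximal optimality of the points for a < b gives
   (b - a) (E'_b - E'_a) <= 0, which is the monotonicity in alpha. *)

Lemma inf_attained (R : realType) (A : set R) (x : R) :
  A x -> lbound A x -> inf A = x.
Proof.
move=> Ax lbx; apply/le_anti/andP; split.
- by apply: (ge_inf (E := A)) => //; exists x.
- by apply: lb_le_inf => //; exists x.
Qed.

Section Argmin.
Context {R : realType} {T : Type}.
Implicit Types (A : set T) (f : T -> R).

Lemma argmin_inf {A f x} : is_argmin A f x -> inf (f @` A) = f x.
Proof. by move=> [Ax xmin]; apply: inf_attained => [|_ [y Ay <-]]; [exists x|apply: xmin]. Qed.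

Lemma argmin_eq {A f x y} : is_argmin A f x -> is_argmin A f y -> f x = f y.
Proof. by move=> [Ax xmin] [Ay ymin]; apply/le_anti; rewrite xmin ?ymin. Qed.

End Argmin.

Section ProximalUpdates.
Context {R : realType} {T : Type} {KL : T -> T -> R} {C : T -> R}.
Hypothesis KL_ge0 : forall t t' : T, 0 <= KL t' t.
Hypothesis prox_attained : forall (a : R) (t : T), 0 < a ->
  exists p, is_argmin setT (fun u => a * KL u t + C u) p.
Hypothesis kball_min_attained : forall (E' : R) (t : T), 0 <= E' ->
  exists s, is_argmin (kball KL E' t) C s.

Lemma Jal_argmin {a t p} :
  is_argmin setT (fun u => a * KL u t + C u) p -> Jal KL C a t = a * KL p t + C p.
Proof. exact: argmin_inf. Qed.

Lemma Jal_le {a} t v : 0 < a -> Jal KL C a t <= a * KL v t + C v.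
Proof.
move=> a0; have [p hp] := prox_attained a t a0.
by rewrite (Jal_argmin hp); apply: hp.2.
Qed.

Lemma prox_argmin_kball {a t p} : 0 <= a ->
  is_argmin setT (fun u => a * KL u t + C u) p ->
  is_argmin (kball KL (KL p t) t) C p.
Proof.
move=> a0 [_ pmin]; split=> [|y yball]; first exact: lexx.
have := pmin y I; have := ler_wpM2l a0 yball; lra.
Qed.

Lemma smoothed_argmin_two_step {t E a t1 p} : 0 < a ->
  is_argmin (kball KL E t) (Jal KL C a) t1 ->
  is_argmin setT (fun u => a * KL u t1 + C u) p ->
  is_argmin (kball KL E t) (fun u => inf (C @` kball KL (KL p t1) u)) t1.
Proof.
move=> a0 [t1E t1min] hp; split=> // u uE.
rewrite (argmin_inf (prox_argmin_kball (ltW a0) hp)).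
have [s hs] := kball_min_attained _ u (KL_ge0 t1 p).
rewrite (argmin_inf hs).
have := t1min u uE; rewrite (Jal_argmin hp).
have := Jal_le u s a0; have := ler_wpM2l (ltW a0) hs.1; lra.
Qed.

Lemma direct_after_smoothed_optimal {t E a t1 p} : 0 < a ->
  is_argmin (kball KL E t) (Jal KL C a) t1 ->
  is_argmin setT (fun u => a * KL u t1 + C u) p ->
  forall t2, is_argmin (kball KL (KL p t1) t1) C t2 ->
    C t2 = Cstar KL C E (KL p t1) t.
Proof.
move=> a0 ht1 hp t2 ht2.
rewrite /Cstar (argmin_inf (smoothed_argmin_two_step a0 ht1 hp)).
rewrite (argmin_inf (prox_argmin_kball (ltW a0) hp)).
exact: argmin_eq ht2 (prox_argmin_kball (ltW a0) hp).
Qed.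

Lemma prox_radius_antitone {A : set T} {a b ta tb pa pb} : 0 < a -> a < b ->
  is_argmin A (Jal KL C a) ta -> is_argmin A (Jal KL C b) tb ->
  is_argmin setT (fun u => a * KL u ta + C u) pa ->
  is_argmin setT (fun u => b * KL u tb + C u) pb ->
  KL pb tb <= KL pa ta.
Proof.
move=> a0 ab [taA tamin] [tbA tbmin] hpa hpb.
have b0 : 0 < b := lt_trans a0 ab.
have := tamin tb tbA; have := tbmin ta taA.
rewrite (Jal_argmin hpa) (Jal_argmin hpb).
have := Jal_le ta pa b0; have := Jal_le tb pb a0.
move=> ha hb hba hab.
have : (b - a) * (KL pb tb - KL pa ta) <= 0 by lra.
by rewrite pmulr_rle0 ?subr_gt0 ?subr_le0.
Qed.

End ProximalUpdates.

Theorem theorem1 (R : realType) (T : Type) (KL : T -> T -> R) (C : T -> R)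
  (KL_ge0 : forall t t' : T, 0 <= KL t' t)
  (KL_id : forall t : T, KL t t = 0)
  (* all minima / argmins in the statement are attained *)
  (hJ : forall (a : R) (t : T), 0 < a ->
          exists t', is_argmin setT (fun u => a * KL u t + C u) t')
  (hR : forall (a E : R) (t : T), 0 < a -> 0 < E ->
          exists t', is_argmin (kball KL E t) (Jal KL C a) t')
  (hD : forall (E' : R) (t : T), 0 <= E' ->
          exists t', is_argmin (kball KL E' t) C t')
  (hCs : forall (E E' : R) (t : T), 0 < E -> 0 <= E' ->
          exists t', is_argmin (kball KL E t)
                       (fun u => inf (C @` kball KL E' u)) t') :
  (* (1) *)
  (forall (t : T) (E a : R), 0 < E -> 0 < a ->
     forall t1 : T, is_argmin (kball KL E t) (Jal KL C a) t1 ->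
     exists E' : R, 0 <= E' /\
       forall t2 : T, is_argmin (kball KL E' t1) C t2 ->
         C t2 = Cstar KL C E E' t)
  /\
  (* (2): the step size E'_alpha(t) can be chosen as a non-increasing
     function of alpha, for the smoothed updates rho alpha = R^{J^alpha}_E(t) *)
  (forall (t : T) (E : R), 0 < E ->
     forall rho : R -> T,
       (forall a : R, 0 < a -> is_argmin (kball KL E t) (Jal KL C a) (rho a)) ->
     exists e : R -> R,
       (forall a : R, 0 < a ->
          0 <= e a /\
          forall t2 : T, is_argmin (kball KL (e a) (rho a)) C t2 ->
            C t2 = Cstar KL C E (e a) t)
       /\ (forall a b : R, 0 < a -> a <= b -> e b <= e a)).
Proof.
have optimal := direct_after_smoothed_optimal KL_ge0 hJ hD.
split=> [t E a _ a0 t1 ht1 | t E _ rho hrho].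
  have [p hp] := hJ a t1 a0.
  by exists (KL p t1); split; [exact: KL_ge0 | exact: optimal a0 ht1 hp].
have /choice[prox hprox] : forall a, exists p, 0 < a ->
    is_argmin setT (fun u => a * KL u (rho a) + C u) p.
  move=> a; case: (pselect (0 < a)) => [a0 | a_notpos]; last by exists t => /a_notpos.
  by have [p hp] := hJ a (rho a) a0; exists p.
exists (fun a => KL (prox a) (rho a)); split=> [a a0 | a b a0].
  by split; [exact: KL_ge0 | exact: optimal a0 (hrho a a0) (hprox a a0)].
rewrite le_eqVlt => /predU1P[<- // | ab].
have b0 := lt_trans a0 ab.
exact: (prox_radius_antitone hJ a0 ab (hrho a a0) (hrho b b0) (hprox a a0) (hprox b b0)).
Qed.
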